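(* Let $T>0$, let $H:\mathbb{R}^n\times\mathbb{R}^n\to\mathbb{R}$ satisfy: $p\mapsto H(x,p)$ convex for every $x$, and for some $M\geqslant0$, $|H(x,p)-H(x,q)|\leqslant M(1+|x|)|p-q|$ and $|H(x,p)-H(y,p)|\leqslant M(1+|p|)|x-y|$ for all $x,y,p,q\in\mathbb{R}^n$. Let $g_0,g_T\in C(\mathbb{R}^n,\mathbb{R})$, let $L(x,v)=\sup_{p\in\mathbb{R}^n}\{\langle v,p\rangle-H(x,p)\}$, and define $U(t_0,x_0)=\inf\{g_0(x(0))+\int_0^{t_0}L(x(s),\dot x(s))\,ds \mid x\in\mathcal{A}([0,t_0],\mathbb{R}^n),\ x(t_0)=x_0\}$, $W(t_0,x_0)=\sup\{g_T(x(T))-\int_{t_0}^{T}L(x(s),\dot x(s))\,ds \mid x\in\mathcal{A}([t_0,T],\mathbb{R}^n),\ x(t_0)=x_0\}$. If $\bar x\in\mathcal{A}([0,T],\mathbb{R}^n)$ is a maximal optimal trajectory in the Bolza problem and $U(T,\cdot)=W(T,\cdot)$, then $\bar x$ is a maximal optimal trajectory in the inverse Bolza problem and $U(t,\bar x(t))=W(t,\bar x(t))$ for all $t\in[0,T]$.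
   Context: $\mathcal{A}([a,b],\mathbb{R}^n)$ denotes the absolutely continuous functions $[a,b]\to\mathbb{R}^n$. An $\bar x\in\mathcal{A}([0,T],\mathbb{R}^n)$ is a maximal optimal trajectory in the Bolza problem if $U(T,\bar x(T))=U(0,\bar x(0))+\int_0^T L(\bar x(s),\dot{\bar x}(s))\,ds$; an $\tilde x\in\mathcal{A}([0,T],\mathbb{R}^n)$ is a maximal optimal trajectory in the inverse Bolza problem if $W(0,\tilde x(0))=W(T,\tilde x(T))-\int_0^T L(\tilde x(s),\dot{\tilde x}(s))\,ds$. *)

From HB Require Import structures.
From mathcomp Require Import all_boot all_order all_algebra.
From mathcomp Require Import all_classical all_reals all_analysis.
Set Implicit Arguments. Unset Strict Implicit. Unset Printing Implicit Defensive.
Import Order.TTheory GRing.Theory Num.Theory.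
Import numFieldNormedType.Exports.
Local Open Scope classical_set_scope.
Local Open Scope ring_scope.

Section Bolza.
Variables (R : realType) (n : nat).
Notation vec := 'rV[R]_n.

Definition dotp (v p : vec) : R := \sum_(i < n) v ord0 i * p ord0 i.
Definition enorm (x : vec) : R := Num.sqrt (\sum_(i < n) x ord0 i ^+ 2).

Definition abs_cont (a b : R) (f : R -> vec) : Prop :=
  forall e : R, 0 < e -> exists2 d : R, 0 < d &
    forall (k : nat) (u v : nat -> R),
      (forall i, (i < k)%N -> a <= u i /\ u i <= v i /\ v i <= b) ->
      (forall i j, (i < k)%N -> (j < k)%N -> i <> j -> v i <= u j \/ v j <= u i) ->
      \sum_(i < k) (v i - u i) < d ->
      \sum_(i < k) enorm (f (v i) - f (u i)) < e.

(* componentwise derivative (defined a.e. for absolutely continuous paths) *)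
Definition dpath (x : R -> vec) (s : R) : vec :=
  \row_(i < n) derive1 (fun t => x t ord0 i) s.

Definition lagr (H : vec -> vec -> R) (x v : vec) : \bar R :=
  ereal_sup [set ((dotp v p - H x p)%:E) | p in [set: vec]].

Definition action (H : vec -> vec -> R) (a b : R) (x : R -> vec) : \bar R :=
  (\int[@lebesgue_measure R]_(s in `[a, b]) lagr H (x s) (dpath x s))%E.

Definition valU (H : vec -> vec -> R) (g0 : vec -> R) (t0 : R) (x0 : vec) : \bar R :=
  ereal_inf [set ((g0 (x 0))%:E + action H 0 t0 x)%E
            | x in [set x | abs_cont 0 t0 x /\ x t0 = x0]].

Definition valW (H : vec -> vec -> R) (gT : vec -> R) (T : R) (t0 : R) (x0 : vec)
  : \bar R :=
  ereal_sup [set ((gT (x T))%:E - action H t0 T x)%E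
            | x in [set x | abs_cont t0 T x /\ x t0 = x0]].

Definition bolza_max_opt (H : vec -> vec -> R) (g0 : vec -> R) (T : R)
  (xb : R -> vec) : Prop :=
  abs_cont 0 T xb /\
  valU H g0 T (xb T) = (valU H g0 0%R (xb 0%R) + action H 0%R T xb)%E.

Definition inv_bolza_max_opt (H : vec -> vec -> R) (gT : vec -> R) (T : R)
  (xb : R -> vec) : Prop :=
  abs_cont 0 T xb /\
  valW H gT T 0%R (xb 0%R) = (valW H gT T T (xb T) - action H 0%R T xb)%E.

End Bolza.

From HB Require Import structures.
From mathcomp Require Import all_boot all_order all_algebra.
From mathcomp Require Import all_classical all_reals all_analysis.
From mathcomp Require Import ring lra.
Import Order.TTheory GRing.Theory Num.Theory.
Import numFieldNormedType.Exports.
Local Open Scope classical_set_scope.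
Local Open Scope ring_scope.

(** The proof is the dynamic programming principle.  Write [A_a^b(x)] for the
    action of [x] on [[a, b]].  Since [W(T, .) = g_T], the hypothesis says
    [U(T, .) = g_T].  An arc [z] on [[0, t]] and an arc [y] on [[t, T]] with
    [z t = y t] concatenate into an admissible arc for [U(T, y T)], so
    [g_T(y T) - A_t^T(y) <= g_0(z 0) + A_0^t(z)], that is [W(t, .) <= U(t, .)].
    Along the optimal arc, [g_T(xb T) = g_0(xb 0) + A_0^T(xb)] and the action is
    additive, so [g_0(xb 0) + A_0^t(xb) = g_T(xb T) - A_t^T(xb)]; this bounds
    [U(t, xb t)] above and [W(t, xb t)] below.  At [t = 0] it is the optimality
    of [xb] in the inverse problem.

    The integrand [s |-> L(x s, x' s)] of an action need not be measurable.  Its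
    integral is still defined, as a supremum over nonnegative simple functions,
    and the lemmas with suffix [_nm] establish additivity without measurability,
    provided the negative parts have finite integrals.  They do here because
    [L(x, v) >= - H(x, 0) >= - |H(0, 0)| - M |x|] and absolutely continuous
    paths are bounded; this is the only use of the hypotheses on [H]. *)

Section ereal_complements.
Context {R : realType}.
Local Open Scope ereal_scope.

Lemma ge0_ereal_supD_le (S1 S2 : set (\bar R)) (c : \bar R) :
  S1 0 -> S2 0 -> (forall a, S1 a -> 0 <= a) -> (forall b, S2 b -> 0 <= b) ->
  (forall a b, S1 a -> S2 b -> a + b <= c) -> ereal_sup S1 + ereal_sup S2 <= c.
Proof.
move=> S10 S20 S1ge0 S2ge0 S12c.
have c0 : 0 <= c by have := S12c _ _ S10 S20; rewrite adde0.
case: c c0 S12c => [c| |] // c0 S12c; last by rewrite leey.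
have supS2 : ereal_sup S2 <= c%:E.
  by apply: ge_ereal_sup => b S2b; have := S12c _ _ S10 S2b; rewrite add0e.
have S2fin : ereal_sup S2 \is a fin_num.
  rewrite ge0_fin_numE; first exact: le_lt_trans supS2 (ltry c).
  exact: le_trans (S2ge0 _ S20) (ereal_sup_ubound S20).
rewrite -lee_suber_addr //; apply: ge_ereal_sup => a S1a.
have afin : a \is a fin_num.
  rewrite ge0_fin_numE ?S1ge0 //; apply: le_lt_trans (ltry c).
  by have := S12c _ _ S1a S20; rewrite adde0.
rewrite lee_suber_addr // -lee_suber_addl //; apply: ge_ereal_sup => b S2b.
by rewrite lee_suber_addl //; exact: S12c.
Qed.

Lemma lee_subEFin_addA (p q : R) (a b : \bar R) : -oo < a -> -oo < b ->
  p%:E <= q%:E + (a + b) -> p%:E - b <= q%:E + a.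
Proof.
case: a => [a| |] //; case: b => [b| |] //= _ _; rewrite ?leNye ?leey //.
by rewrite -!EFinD !lee_fin; lra.
Qed.

Lemma adde_EFin_eq_sub {p q : R} {a b : \bar R} : -oo < a -> -oo < b ->
  a + b = (p - q)%:E -> q%:E + a = p%:E - b.
Proof.
case: a => [a| |] //; case: b => [b| |] //= _ _ [ab].
by congr EFin; lra.
Qed.

End ereal_complements.

Section nonmeasurable_integral.
Context d (T : measurableType d) (R : realType) (mu : {measure set T -> \bar R}).
Local Open Scope ereal_scope.
Import HBNNSimple.

Lemma ge0_le_integral_nm (D : set T) (f g : T -> \bar R) :
  (forall x, D x -> 0 <= f x) -> (forall x, D x -> f x <= g x) ->
  \int[mu]_(x in D) f x <= \int[mu]_(x in D) g x.
Proof.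
move=> f0 fg; have g0 x : D x -> 0 <= g x by move=> Dx; exact: le_trans (f0 _ Dx) (fg _ Dx).
rewrite !ge0_integralE //; apply: ereal_sup_le => _ [h hf <-]; exists h => // x.
apply: le_trans (hf x) _; rewrite !patchE; case: ifP => // /set_mem; exact: fg.
Qed.

Let nnsfun_le_patch0 {h : {nnsfun T >-> R}} {D : set T} {f : T -> \bar R} {x : T} :
  (forall y, (h y)%:E <= (f \_ D) y) -> ~ D x -> h x = 0%R.
Proof.
move=> hf Dx; apply/eqP; rewrite eq_le fun_ge0 andbT -lee_fin.
by have := hf x; rewrite patchE ifF //; apply/negbTE; rewrite notin_setE.
Qed.

Section ge0_integral_setU_nm.
Variables (A B : set T) (f : T -> \bar R).
Hypotheses (mA : measurable A) (mB : measurable B) (AB0 : A `&` B = set0).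
Hypothesis f0 : forall x, 0 <= f x.

Let notAB {x} : A x -> B x -> False.
Proof. by move=> Ax Bx; have : (A `&` B) x by []; rewrite AB0. Qed.

Let le_integral_setU :
  \int[mu]_(x in A `|` B) f x <= \int[mu]_(x in A) f x + \int[mu]_(x in B) f x.
Proof.
rewrite !ge0_integralE //; apply: ge_ereal_sup => _ [h hf <-].
have -> : sintegral mu h =
    sintegral mu (proj_nnsfun h mA) + sintegral mu (proj_nnsfun h mB).
  rewrite -sintegralD; apply: eq_sintegral => x /=.
  rewrite !measurable_realfun.mindicE.
  have [xA|xA] := boolP (x \in A); have [xB|xB] := boolP (x \in B).
  + by move: xA xB; rewrite !inE => xA xB; case: (notAB xA xB).
  + by rewrite mulr1 mulr0 addr0.
  + by rewrite mulr1 mulr0 add0r.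
  + rewrite !mulr0 addr0; apply: (nnsfun_le_patch0 hf).
    by move=> -[/mem_set|/mem_set]; [rewrite (negbTE xA)|rewrite (negbTE xB)].
apply: leeD; apply: ereal_sup_ubound;
  [exists (proj_nnsfun h mA)|exists (proj_nnsfun h mB)] => // x /=;
  rewrite measurable_realfun.mindicE !patchE; case: ifP => xD;
  rewrite ?mulr1 ?mulr0 //; have := hf x; rewrite !patchE ifT // inE;
  [left|right]; by rewrite -inE.
Qed.

Let ge_integral_setU :
  \int[mu]_(x in A) f x + \int[mu]_(x in B) f x <= \int[mu]_(x in A `|` B) f x.
Proof.
have S0 (D : set T) : [set sintegral mu h | h in
    [set h : {nnsfun T >-> R} | forall x, (h x)%:E <= (f \_ D) x]] 0.
  exists nnsfun0; last by rewrite sintegral0.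
  by move=> x /=; rewrite patchE; case: ifP.
have Sge0 (D : set T) : forall a, [set sintegral mu h | h in
    [set h : {nnsfun T >-> R} | forall x, (h x)%:E <= (f \_ D) x]] a -> 0 <= a.
  by move=> _ [h _ <-]; exact: sintegral_ge0.
rewrite !ge0_integralE //.
apply: ge0_ereal_supD_le; [exact: S0|exact: S0|exact: Sge0|exact: Sge0|].
move=> _ _ [h1 h1f <-] [h2 h2f <-]; rewrite -sintegralD.
apply: ereal_sup_ubound; exists (add_nnsfun h1 h2) => // x /=.
rewrite patchE; case: (boolP (x \in A `|` B)) => [|/negP xAB].
- rewrite inE => -[xA|xB].
  + rewrite (nnsfun_le_patch0 h2f (notAB xA)) addr0.
    by have := h1f x; rewrite patchE ifT // inE.
  + rewrite (nnsfun_le_patch0 h1f (notAB ^~ xB)) add0r.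
    by have := h2f x; rewrite patchE ifT // inE.
- have nA : ~ A x by move=> xA; apply: xAB; apply/mem_set; left.
  have nB : ~ B x by move=> xB; apply: xAB; apply/mem_set; right.
  by rewrite (nnsfun_le_patch0 h1f nA) (nnsfun_le_patch0 h2f nB) addr0.
Qed.

Lemma ge0_integral_setU_nm :
  \int[mu]_(x in A `|` B) f x = \int[mu]_(x in A) f x + \int[mu]_(x in B) f x.
Proof. exact/le_anti/andP. Qed.

End ge0_integral_setU_nm.

Lemma integral_setU_nm (A B : set T) (f : T -> \bar R) :
  measurable A -> measurable B -> A `&` B = set0 ->
  \int[mu]_(x in A) f^\- x \is a fin_num -> \int[mu]_(x in B) f^\- x \is a fin_num ->
  \int[mu]_(x in A `|` B) f x = \int[mu]_(x in A) f x + \int[mu]_(x in B) f x.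
Proof.
move=> mA mB AB0 nA nB.
rewrite [in LHS]integralE [X in _ = X + _]integralE [X in _ = _ + X]integralE.
rewrite !ge0_integral_setU_nm //; try exact: funepos_ge0; try exact: funeneg_ge0.
by rewrite fin_num_oppeD // addeACA.
Qed.

Lemma integral_funeneg_fin_num (D : set T) (f : T -> \bar R) (C : R) :
  measurable D -> mu D < +oo -> (forall x, D x -> C%:E <= f x) ->
  \int[mu]_(x in D) f^\- x \is a fin_num.
Proof.
move=> mD muD fC; rewrite ge0_fin_numE; last exact: integral_ge0.
have negC x : D x -> f^\- x <= (Num.max (- C) 0%R)%:E.
  move=> Dx; rewrite funenegE EFin_max.
  by apply: leU2 => //; rewrite EFinN leeN2; exact: fC.
apply: le_lt_trans (ge0_le_integral_nm _ _ _ (fun x _ => funeneg_ge0 f x) negC) _.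
by rewrite integral_cst // lte_mul_pinfty // lee_fin le_max lexx orbT.
Qed.

End nonmeasurable_integral.

Section interval_integral.
Context {R : realType}.
Local Notation mu := (@lebesgue_measure R).
Local Open Scope ereal_scope.
Implicit Types (f : R -> \bar R) (a b t C : R).

Lemma integral_funeneg_itv_fin_num (D : set R) f a b C :
  measurable D -> D `<=` `[a, b] -> (forall s, (a <= s <= b)%R -> C%:E <= f s) ->
  \int[mu]_(x in D) f^\- x \is a fin_num.
Proof.
move=> mD Dab fC.
have mu_ab : mu `[a, b] < +oo.
  by rewrite lebesgue_measure_itv; case: ifP => _; rewrite ?ltry // -EFinD ltry.
apply: (@integral_funeneg_fin_num _ _ _ mu D f C mD).
- exact: le_lt_trans (le_measure mu (mem_set mD) (mem_set (measurable_itv _)) Dab) mu_ab.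
- by move=> s /Dab; rewrite /= in_itv; exact: fC.
Qed.

Lemma integral_setD1_nm f t (D : set R) :
  measurable D -> \int[mu]_(x in D `\ t) f^\- x \is a fin_num ->
  \int[mu]_(x in D `\ t) f x = \int[mu]_(x in D) f x.
Proof.
move=> mD finDt; rewrite -[in RHS](setUIDK D [set t]) [in RHS]setUC.
have Dt_sub : D `&` [set t] `<=` [set t] by move=> x [].
rewrite integral_setU_nm //.
- by rewrite (integral_Sset1 _ Dt_sub) adde0.
- exact: (measurableD mD (measurable_set1 t)).
- exact: (measurableI _ _ mD (measurable_set1 t)).
- by apply/seteqP; split => // x [[_ xt] [_ tx]].
- by rewrite (integral_Sset1 _ Dt_sub).
Qed.

Let integral_funeneg_subitv_fin_num {f a b C} :
  (forall s, (a <= s <= b)%R -> C%:E <= f s) ->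
  forall (u v : R) (b1 b2 : bool), (a <= u)%R -> (v <= b)%R ->
  \int[mu]_(x in [set` Interval (BSide b1 u) (BSide b2 v)]) f^\- x \is a fin_num.
Proof.
move=> fC u v b1 b2 au vb; apply: integral_funeneg_itv_fin_num fC => //.
by apply: subset_itvScc; rewrite bnd_simp; case: b1 b2 => -[] //; exact: ltW.
Qed.

Lemma integral_itv_cc_oo_nm {f a b C} :
  (forall s, (a <= s <= b)%R -> C%:E <= f s) ->
  \int[mu]_(x in `[a, b]) f x = \int[mu]_(x in `]a, b[) f x.
Proof.
move=> fC; have fin := integral_funeneg_subitv_fin_num fC.
rewrite -(integral_setD1_nm f a `[a, b]%classic) ?setDitv1l ?fin //.
by rewrite -(integral_setD1_nm f b `]a, b]%classic) ?setDitv1r ?fin.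
Qed.

Lemma integral_itv_split_nm {f a t b C} : (a <= t <= b)%R ->
  (forall s, (a <= s <= b)%R -> C%:E <= f s) ->
  \int[mu]_(x in `[a, b]) f x =
  \int[mu]_(x in `[a, t]) f x + \int[mu]_(x in `[t, b]) f x.
Proof.
move=> /andP[a_le_t t_le_b] fC; have fin := integral_funeneg_subitv_fin_num fC.
have split_t : `[a, b] `\ t = `[a, t[ `|` `]t, b] :> set R.
  by rewrite (@itv_bndbnd_setU _ _ _ (BLeft t)) ?bnd_simp // setDUl setDitv1r setDitv1l.
rewrite -(integral_setD1_nm f t `[a, b]%classic) //; last first.
  by apply: integral_funeneg_itv_fin_num fC => //; exact: measurableD.
rewrite -(integral_setD1_nm f t `[a, t]%classic) ?setDitv1r ?fin //.
rewrite -(integral_setD1_nm f t `[t, b]%classic) ?setDitv1l ?fin //.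
rewrite split_t integral_setU_nm ?fin //.
apply/seteqP; split => // x [] /=; rewrite !in_itv /= => /andP[_ xt] /andP[tx _].
by have := lt_trans tx xt; rewrite ltxx.
Qed.

End interval_integral.

Section euclidean_norm.
Context {R : realType}.

Lemma sum_mul_le_sqrt (I : finType) (a b : I -> R) :
  \sum_i a i * b i <= Num.sqrt (\sum_i a i ^+ 2) * Num.sqrt (\sum_i b i ^+ 2).
Proof.
set A := \sum_i a i ^+ 2; set B := \sum_i b i ^+ 2; set P := \sum_i a i * b i.
have A0 : 0 <= A by apply: sumr_ge0 => i _; exact: sqr_ge0.
have B0 : 0 <= B by apply: sumr_ge0 => i _; exact: sqr_ge0.
have lagrange : \sum_i \sum_j (a i * b j - a j * b i) ^+ 2 = 2 * (A * B - P ^+ 2).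
  have -> : \sum_i \sum_j (a i * b j - a j * b i) ^+ 2 =
      \sum_i \sum_j (a i ^+ 2 * b j ^+ 2 + a j ^+ 2 * b i ^+ 2
                     - 2 * ((a i * b i) * (a j * b j))).
    by apply: eq_bigr => i _; apply: eq_bigr => j _; ring.
  under eq_bigr => i _ do rewrite sumrB big_split /=.
  rewrite sumrB big_split /=.
  have -> : \sum_i \sum_j a i ^+ 2 * b j ^+ 2 = A * B by rewrite big_distrlr.
  have -> : \sum_i \sum_j a j ^+ 2 * b i ^+ 2 = A * B.
    by rewrite exchange_big big_distrlr.
  have -> : \sum_i \sum_j 2 * (a i * b i * (a j * b j)) = 2 * P ^+ 2.
    by rewrite expr2 big_distrlr mulr_sumr; apply: eq_bigr => i _; rewrite mulr_sumr.
  ring.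
have : P ^+ 2 <= A * B.
  rewrite -subr_ge0 -(pmulr_rge0 _ (ltr0Sn _ 1)) -lagrange.
  by apply: sumr_ge0 => i _; apply: sumr_ge0 => j _; exact: sqr_ge0.
rewrite -sqrtrM // => PAB; apply: le_trans (ler_norm P) _.
by rewrite -sqrtr_sqr ler_sqrt ?mulr_ge0.
Qed.

Context {n : nat}.
Local Notation vec := 'rV[R]_n.

Lemma enorm_ge0 (x : vec) : 0 <= enorm x.
Proof. exact: sqrtr_ge0. Qed.

Lemma enorm0 : enorm (0 : vec) = 0.
Proof. by rewrite /enorm big1 ?sqrtr0 // => i _; rewrite mxE expr0n. Qed.

Lemma enormD (x y : vec) : enorm (x + y) <= enorm x + enorm y.
Proof.
rewrite /enorm; set A := \sum_i x ord0 i ^+ 2; set B := \sum_i y ord0 i ^+ 2.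
have A0 : 0 <= A by apply: sumr_ge0 => i _; exact: sqr_ge0.
have B0 : 0 <= B by apply: sumr_ge0 => i _; exact: sqr_ge0.
have -> : \sum_i (x + y) ord0 i ^+ 2 = A + B + 2 * \sum_i x ord0 i * y ord0 i.
  rewrite /A /B mulr_sumr -!big_split /=; apply: eq_bigr => i _; rewrite mxE; ring.
rewrite -[leRHS]ger0_norm ?addr_ge0 ?sqrtr_ge0 // -sqrtr_sqr ler_sqrt ?sqr_ge0 //.
rewrite sqrrD !sqr_sqrtr // [leRHS]addrAC lerD2l -[leRHS]mulr_natl.
by rewrite ler_pM2l // sum_mul_le_sqrt.
Qed.

End euclidean_norm.

Section absolutely_continuous.
Context {R : realType} {n : nat}.
Local Notation vec := 'rV[R]_n.
Implicit Types (a b c d t : R) (x y z : R -> vec).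

Lemma abs_cont_cst a b (x0 : vec) : abs_cont a b (fun=> x0).
Proof.
move=> e e0; exists 1 => // k u v _ _ _.
by rewrite big1 // => i _; rewrite subrr enorm0.
Qed.

Lemma abs_cont_comp a b c d x (phi : R -> R) :
  {homo phi : u v / u <= v} -> (forall u v, u <= v -> phi v - phi u <= v - u) ->
  (forall s, a <= s <= b -> c <= phi s <= d) ->
  abs_cont c d x -> abs_cont a b (x \o phi).
Proof.
move=> phi_nd phi_lip phi_ab xac e e0; have [del del0 xdel] := xac e e0.
exists del => // k u v uv_ab uv_disj uv_len.
apply: (xdel k (phi \o u) (phi \o v)).
- move=> i ik; have [au [uv vb]] := uv_ab i ik.
  have /andP[cu _] : c <= phi (u i) <= d by apply: phi_ab; rewrite au (le_trans uv vb).
  have /andP[_ vd] : c <= phi (v i) <= d by apply: phi_ab; rewrite vb (le_trans au uv).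
  by split=> //; split=> //; exact: phi_nd.
- by move=> i j ik jk ij; case: (uv_disj i j ik jk ij) => h; [left|right]; exact: phi_nd.
- apply: le_lt_trans uv_len; apply: ler_sum => i _; apply: phi_lip.
  by have [_ []] := uv_ab i (ltn_ord i).
Qed.

Lemma abs_cont_sub {a b} c d {x} : abs_cont a b x -> a <= c -> d <= b -> abs_cont c d x.
Proof.
move=> xac ac db; apply: (@abs_cont_comp c d a b x id) => // s /andP[c_le_s sd].
by rewrite (le_trans ac c_le_s) (le_trans sd db).
Qed.

Lemma abs_cont_add a b x y :
  abs_cont a b x -> abs_cont a b y -> abs_cont a b (fun s => x s + y s).
Proof.
move=> xac yac e e0; have e20 : 0 < e / 2 by rewrite divr_gt0.
have [dx dx0 xdx] := xac _ e20; have [dy dy0 ydy] := yac _ e20.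
exists (Num.min dx dy); first by rewrite lt_min dx0 dy0.
move=> k u v uv_ab uv_disj; rewrite lt_min => /andP[lenx leny].
apply: le_lt_trans (_ : \sum_(i < k) (enorm (x (v i) - x (u i)) +
                                      enorm (y (v i) - y (u i))) < e).
  apply: ler_sum => i _; rewrite opprD addrACA; exact: enormD.
by rewrite big_split /= (splitr e) ltrD // ?xdx ?ydy.
Qed.

Lemma abs_cont_concat {a t b z y} : a <= t <= b ->
  abs_cont a t z -> abs_cont t b y -> z t = y t ->
  abs_cont a b (fun s => if s <= t then z s else y s).
Proof.
move=> /andP[a_le_t t_le_b] zac yac zy.
have -> : (fun s => if s <= t then z s else y s) =
    fun s => z (Num.min s t) + y (Num.max s t) + (- z t).
  apply/funext => s; have [st|ts] := leP s t.
    by rewrite zy addrK.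
  by rewrite addrAC subrr add0r.
apply: abs_cont_add; last exact: abs_cont_cst.
apply: abs_cont_add.
- apply: (@abs_cont_comp a b a t z (fun s => Num.min s t) _ _ _ zac)
    => [u v uv|u v uv|s /andP[a_le_s _]].
  + by rewrite le_min2 ?lexx.
  + by have [ut|tu] := leP u t; have [vt|tv] := leP v t; lra.
  + by rewrite le_min a_le_s a_le_t ge_min lexx orbT.
- apply: (@abs_cont_comp a b t b y (fun s => Num.max s t) _ _ _ yac)
    => [u v uv|u v uv|s /andP[_ s_le_b]].
  + by rewrite le_max2 ?lexx.
  + by have [ut|tu] := leP u t; have [vt|tv] := leP v t; lra.
  + by rewrite le_max lexx orbT ge_max s_le_b t_le_b.
Qed.

Lemma abs_cont_bounded a b x : abs_cont a b x ->
  exists K, forall s, a <= s <= b -> enorm (x s) <= K.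
Proof.
move=> /(_ 1 ltr01) [d d0 xd].
have step u v : a <= u -> u <= v -> v <= b -> v - u < d -> enorm (x v - x u) < 1.
  move=> au uv vb vud; have := xd 1%N (fun=> u) (fun=> v); rewrite !big_ord1.
  by apply => // i j; rewrite !ltnS !leqn0 => /eqP -> /eqP ->.
pose del := d / 2; have del0 : 0 < del by rewrite divr_gt0.
have chain (k : nat) s : a <= s <= b -> s - a <= k%:R * del -> enorm (x s - x a) <= k%:R.
  elim: k s => [|k IH] s /andP[a_le_s sb].
    by rewrite mul0r subr_le0 => sa; rewrite (@le_anti _ _ s a) ?a_le_s ?sa // subrr enorm0.
  move=> sak; set s' := Num.max a (s - del).
  have a_le_s' : a <= s' by rewrite le_max lexx.
  have s's : s' <= s by rewrite ge_max a_le_s gerBl ltW.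
  have s'ak : s' - a <= k%:R * del.
    move: sak; rewrite /s' -natr1 mulrDl mul1r; have := mulr_ge0 (ler0n R k) (ltW del0).
    by have [] := leP a (s - del); lra.
  have -> : x s - x a = (x s - x s') + (x s' - x a) by rewrite addrA subrK.
  apply: le_trans (enormD _ _) _; rewrite -natr1 [_ + 1]addrC; apply: lerD.
    apply/ltW/step => //; have : s - del <= s' by rewrite le_max lexx orbT.
    by rewrite /del; lra.
  by apply: IH s'ak; rewrite a_le_s' (le_trans s's sb).
have [k kP] : exists k : nat, b - a <= k%:R * del.
  exists (Num.Def.archi_bound ((b - a) / del)).
  by rewrite -ler_pdivrMr //; apply/ltW/unstable.ltr_bound.
exists (enorm (x a) + k%:R) => s sab.
have -> : x s = (x s - x a) + x a by rewrite subrK.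
apply: le_trans (enormD _ _) _; rewrite addrC lerD2l chain //.
by case/andP: sab => _ sb; move: kP; lra.
Qed.

End absolutely_continuous.

Section bolza.
Context {R : realType} {n : nat}.
Local Notation vec := 'rV[R]_n.
Local Open Scope ereal_scope.
Context {H : vec -> vec -> R}.
Implicit Types (a b t : R) (x y z : R -> vec).

Lemma lagr_ge_negH0 (x v : vec) : (- H x 0)%:E <= lagr H x v.
Proof.
apply: ereal_sup_ubound; exists 0%R => //.
by rewrite /dotp big1 ?sub0r // => i _; rewrite mxE mulr0.
Qed.

Lemma action_itv1 a x : action H a a x = 0.
Proof. by rewrite /action set_itv1 integral_set1. Qed.

Lemma dpath_near x y s : (\forall r \near s, x r = y r) -> dpath x s = dpath y s.
Proof.
move=> xy; apply/rowP => i; rewrite !mxE !derive1E; apply: near_eq_derive.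
by apply: filterS xy => r ->.
Qed.

Context {g0 gT : vec -> R} {T : R}.

Lemma valU_at0 (x0 : vec) : valU H g0 0 x0 = (g0 x0)%:E.
Proof.
apply/le_anti/andP; split.
- apply: ereal_inf_lbound; exists (fun=> x0); first by split; [exact: abs_cont_cst|].
  by rewrite action_itv1 adde0.
- by apply: le_ereal_inf_tmp => _ [x [_ <-] <-]; rewrite action_itv1 adde0.
Qed.

Lemma valW_atT (x0 : vec) : valW H gT T T x0 = (gT x0)%:E.
Proof.
apply/le_anti/andP; split.
- by apply: ge_ereal_sup => _ [x [_ <-] <-]; rewrite action_itv1 sube0.
- apply: ereal_sup_ubound; exists (fun=> x0); first by split; [exact: abs_cont_cst|].
  by rewrite action_itv1 sube0.
Qed.

Context {M : R}.
Hypothesis H_lipx : forall x y p : vec,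
  (`|H x p - H y p| <= M * (1 + enorm p) * enorm (x - y))%R.

Lemma lagr_path_lbounded {a b x} : abs_cont a b x ->
  exists C : R, forall s, (a <= s <= b)%R -> C%:E <= lagr H (x s) (dpath x s).
Proof.
move=> /abs_cont_bounded [K xK]; exists (- (`|H 0 0| + `|M| * K))%R => s sab.
apply: le_trans (lagr_ge_negH0 _ _); rewrite lee_fin lerN2.
have := H_lipx (x s) 0 0; rewrite enorm0 addr0 mulr1 subr0 => H0.
apply: le_trans (_ : H 0 0 + M * enorm (x s) <= _)%R.
  by rewrite -lerBlDl; exact: le_trans (ler_norm _) H0.
apply: lerD; first exact: ler_norm.
apply: le_trans (ler_norm _) _; rewrite normrM (ger0_norm (enorm_ge0 _)).
by apply: ler_wpM2l => //; exact: xK.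
Qed.

Lemma action_gtNy {a b x} : abs_cont a b x -> -oo < action H a b x.
Proof.
move=> /lagr_path_lbounded [C xC]; rewrite /action integralE.
set L := fun s => lagr H (x s) (dpath x s).
have /fineK <- : \int[lebesgue_measure]_(s in `[a, b]) L^\- s \is a fin_num.
  exact: integral_funeneg_itv_fin_num xC.
have : 0 <= \int[lebesgue_measure]_(s in `[a, b]) L^\+ s.
  by apply: integral_ge0 => s _; exact: funepos_ge0.
by case: (\int[_]_(_ in _) _) => [p| |] //= _; rewrite -?EFinB ltNyr.
Qed.

Lemma action_split {a t b x} : abs_cont a b x -> (a <= t <= b)%R ->
  action H a b x = action H a t x + action H t b x.
Proof.
move=> xac tab; have [C xC] := lagr_path_lbounded xac.
exact: integral_itv_split_nm tab xC.
Qed.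

Lemma eq_action_itv_oo a b x y : abs_cont a b x -> abs_cont a b y ->
  (forall s, (a < s < b)%R -> x s = y s) -> action H a b x = action H a b y.
Proof.
move=> xac yac xy; have [Cx xC] := lagr_path_lbounded xac.
have [Cy yC] := lagr_path_lbounded yac.
rewrite /action (integral_itv_cc_oo_nm xC) (integral_itv_cc_oo_nm yC).
apply: eq_integral => s /set_mem /= sab; move: (sab); rewrite in_itv /= => /xy ->.
congr lagr; apply: dpath_near; apply: filterS (near_in_itvoo sab) => r.
by rewrite in_itv /=; exact: xy.
Qed.

Lemma action_concat {a t b z y} : (a <= t <= b)%R ->
  abs_cont a t z -> abs_cont t b y -> z t = y t ->
  action H a b (fun s => if (s <= t)%R then z s else y s) =
  action H a t z + action H t b y.
Proof.
move=> /[dup] tab /andP[a_le_t t_le_b] zac yac zy.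
have wac := abs_cont_concat tab zac yac zy.
rewrite (action_split wac tab); congr (_ + _); apply: eq_action_itv_oo => //.
- exact: (abs_cont_sub a t wac).
- by move=> s /andP[_ st]; rewrite ltW.
- exact: (abs_cont_sub t b wac).
- by move=> s /andP[ts _]; rewrite leNgt ts.
Qed.

Lemma valW_le_valU t (x0 : vec) : (0 <= t <= T)%R ->
  (forall v : vec, valU H g0 T v = (gT v)%:E) -> valW H gT T t x0 <= valU H g0 t x0.
Proof.
move=> tT UT; apply: ge_ereal_sup => _ [y [yac yt] <-].
apply: le_ereal_inf_tmp => _ [z [zac zt] <-].
have zy : z t = y t by rewrite zt yt.
pose w s := if (s <= t)%R then z s else y s.
have wT : w T = y T.
  rewrite /w; case: ifPn => // Tt; suff -> : T = t by [].
  by apply/le_anti; rewrite Tt; case/andP: tT.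
have w0 : w 0%R = z 0%R by rewrite /w; case/andP: tT => ->.
have : valU H g0 T (w T) <= (g0 (w 0%R))%:E + action H 0 T w.
  by apply: ereal_inf_lbound; exists w => //; split=> //; exact: abs_cont_concat.
rewrite wT UT w0 (action_concat tT zac yac zy).
by apply: lee_subEFin_addA; apply: action_gtNy.
Qed.

Lemma valU_le_valW_opt t xb : (0 <= t <= T)%R -> abs_cont 0 T xb ->
  action H 0 T xb = (gT (xb T) - g0 (xb 0%R))%:E ->
  valU H g0 t (xb t) <= valW H gT T t (xb t).
Proof.
move=> tT xbac A0T; have /andP[t0 t_le_T] := tT.
have xbac1 : abs_cont 0 t xb by exact: (abs_cont_sub 0 t xbac).
have xbac2 : abs_cont t T xb by exact: (abs_cont_sub t T xbac).
apply: le_trans (ereal_inf_lbound _) _; first by exists xb.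
apply: le_trans _ (ereal_sup_ubound _); last by exists xb.
have := action_split xbac tT; rewrite A0T => /esym split_t.
by rewrite (adde_EFin_eq_sub (action_gtNy xbac1) (action_gtNy xbac2) split_t).
Qed.

End bolza.

Theorem proposition5p6 (R : realType) (n : nat) (T : R)
  (H : 'rV[R]_n -> 'rV[R]_n -> R) (M : R) (g0 gT : 'rV[R]_n -> R)
  (xb : R -> 'rV[R]_n) :
  0 < T ->
  (forall (x p q : 'rV[R]_n) (l : R), 0 <= l <= 1 ->
     H x (l *: p + (1 - l) *: q) <= l * H x p + (1 - l) * H x q) ->
  0 <= M ->
  (forall x p q : 'rV[R]_n,
     `|H x p - H x q| <= M * (1 + enorm x) * enorm (p - q)) ->
  (forall x y p : 'rV[R]_n,
     `|H x p - H y p| <= M * (1 + enorm p) * enorm (x - y)) ->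
  continuous g0 -> continuous gT ->
  bolza_max_opt H g0 T xb ->
  (forall x : 'rV[R]_n, valU H g0 T x = valW H gT T T x) ->
  inv_bolza_max_opt H gT T xb /\
  (forall t : R, 0 <= t <= T -> valU H g0 t (xb t) = valW H gT T t (xb t)).
Proof.
move=> T_gt0 _ _ _ H_lipx _ _ [xbac xb_opt] UW.
have UT x : valU H g0 T x = (gT x)%:E by rewrite UW valW_atT.
have A0T : action H 0 T xb = (gT (xb T) - g0 (xb 0))%:E.
  move: xb_opt; rewrite UT valU_at0.
  by case: (action H 0 T xb) => //= a [->]; rewrite addrAC subrr add0r.
have UW_t t : 0 <= t <= T -> valU H g0 t (xb t) = valW H gT T t (xb t).
  move=> tT; apply/le_anti; rewrite (valU_le_valW_opt H_lipx) //.
  exact: (valW_le_valU H_lipx).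
split=> //; split=> //.
rewrite -UW_t ?lexx ?ltW // valU_at0 valW_atT A0T.
by rewrite -EFinB opprB addrC subrK.
Qed.
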